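(* Using the principal branches of $\sqrt{\cdot}$ and $\arctan$, for $|z-1|<1$, \[ \frac{\arctan\sqrt z}{\sqrt z}=\sum_{n=0}^{\infty}\frac{(-1)^n}{2^n}\Bigg[(2n-1)!!\,\frac{\pi}{4}+\frac{n!}{2^n}\sum_{k=1}^{n}(-1)^k\binom{2n-k}{n}\frac{2^{k/2}}{k}\sin\frac{3k\pi}{4}\Bigg]\frac{(z-1)^n}{n!}. \]
   Context: $(2n-1)!!=1\cdot3\cdots(2n-1)$ for $n\ge1$, and $(-1)!!=1$. An empty sum is $0$. *)

From Stdlib Require Import Reals Lra.
From Coquelicot Require Import Coquelicot.
Open Scope R_scope.

(* Principal argument Arg z in (-PI, PI], with Arg 0 = 0. *)
Definition Carg (z : C) : R :=
  let x := Re z in let y := Im z in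
  if Rlt_dec 0 x then atan (y / x)
  else if Rlt_dec x 0 then
    (if Rle_dec 0 y then atan (y / x) + PI else atan (y / x) - PI)
  else if Rlt_dec 0 y then PI / 2
  else if Rlt_dec y 0 then - (PI / 2) else 0.

Definition Clog (z : C) : C := (ln (Cmod z), Carg z).

Definition Csqrt (z : C) : C :=
  (sqrt (Cmod z) * cos (Carg z / 2), sqrt (Cmod z) * sin (Carg z / 2)).

Definition Catan (w : C) : C :=
  Cmult (Cdiv Ci (RtoC 2))
    (Cminus (Clog (Cminus (RtoC 1) (Cmult Ci w)))
            (Clog (Cplus (RtoC 1) (Cmult Ci w)))).

(* (2n-1)!! = 1*3*...*(2n-1), with (-1)!! = 1. *)
Fixpoint odd_dfact (n : nat) : nat :=
  match n with
  | O => 1%nat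
  | S m => ((2 * m + 1) * odd_dfact m)%nat
  end.

Fixpoint sum_1_to (f : nat -> R) (n : nat) : R :=
  match n with
  | O => 0
  | S m => sum_1_to f m + f (S m)
  end.

Definition coef3p2 (n : nat) : R :=
  ((-1) ^ n / 2 ^ n) *
  (INR (odd_dfact n) * (PI / 4) +
   INR (Factorial.fact n) / 2 ^ n *
   sum_1_to (fun k =>
      (-1) ^ k * Binomial.C (2 * n - k) n * Rpower 2 (INR k / 2) / INR k
      * sin (3 * INR k * PI / 4)) n)
  / INR (Factorial.fact n).

(* Write w = sqrt z; then Re w > 0 and arctan w / w = int_0^1 dt / (1 + z t^2).
   As 1 + z t^2 = (1 + t^2) (1 - q) with q = (1 - z) t^2 / (1 + t^2) and |q| <= |1 - z| < 1,
   expanding geometrically and integrating termwise gives the coefficients (-1)^n I_n,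
   I_n = int_0^1 t^(2n) / (1 + t^2)^(n+1) dt, with a remainder after N terms at most
   |1 - z|^N.  Differentiating t^(2n+1) / (1 + t^2)^(n+1) gives
   2 (n+1) I_(n+1) = (2n+1) I_n - 2^-(n+1), and I_0 = pi/4.  The bracket of the statement
   divided by 2^n n! satisfies the same recurrence: with (1 - i)^k = u_k + i v_k one has
   v_k = (-1)^k 2^(k/2) sin (3 k pi / 4), and Pascal's rule reduces the recurrence to
   sum_(j <= n) C(2n - j, n) (u_j + v_j) = 2^n. *)

From Stdlib Require Import Reals Lra Lia.
From Coquelicot Require Import Coquelicot.
Open Scope R_scope.

Fixpoint rsum (f : nat -> R) (n : nat) : R :=
  match n with O => 0 | S m => rsum f m + f m end.

Lemma rsum_S f n : rsum f (S n) = rsum f n + f n.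
Proof. reflexivity. Qed.

Lemma rsum_ext f g n :
  (forall k, (k < n)%nat -> f k = g k) -> rsum f n = rsum g n.
Proof.
  induction n as [|n IH]; intros Hfg; [reflexivity|].
  rewrite !rsum_S, IH by (intros; apply Hfg; lia).
  rewrite Hfg by lia; reflexivity.
Qed.

Lemma rsum_Sl f n : rsum f (S n) = f O + rsum (fun k => f (S k)) n.
Proof. induction n as [|n IH]; simpl in *; [|rewrite IH]; ring. Qed.

Lemma rsum_plus f g n : rsum (fun k => f k + g k) n = rsum f n + rsum g n.
Proof. induction n; simpl; lra. Qed.

Lemma rsum_minus f g n : rsum (fun k => f k - g k) n = rsum f n - rsum g n.
Proof. induction n; simpl; lra. Qed.

Lemma rsum_scal c f n : rsum (fun k => c * f k) n = c * rsum f n.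
Proof. induction n as [|n IH]; simpl; [|rewrite IH]; ring. Qed.

Lemma sum_1_to_rsum f n : sum_1_to f n = rsum (fun k => f (S k)) n.
Proof. induction n as [|n IH]; simpl; [|rewrite IH]; reflexivity. Qed.

(* [Binomial.C n k] is not 0 when [n < k]: its factorial formula uses truncated subtraction. *)
Definition binom (n k : nat) : R := if (k <=? n)%nat then Binomial.C n k else 0.

Lemma binom_fact n k : (k <= n)%nat ->
  binom n k = INR (Factorial.fact n) / (INR (Factorial.fact k) * INR (Factorial.fact (n - k))).
Proof. intros Hk; unfold binom; apply Nat.leb_le in Hk; rewrite Hk; reflexivity. Qed.

Lemma binom_gt n k : (n < k)%nat -> binom n k = 0.
Proof. intros Hk; unfold binom; destruct (Nat.leb_spec k n); [lia|reflexivity]. Qed.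

Lemma binom_diag n : binom n n = 1.
Proof. unfold binom; rewrite Nat.leb_refl; apply C_n_n. Qed.

Lemma binom_pascal n k : binom (S n) (S k) = binom n k + binom n (S k).
Proof.
  destruct (Nat.lt_trichotomy k n) as [Hkn|[->|Hnk]].
  - unfold binom. replace (S k <=? S n)%nat with true by (symmetry; apply Nat.leb_le; lia).
    replace (k <=? n)%nat with true by (symmetry; apply Nat.leb_le; lia).
    replace (S k <=? n)%nat with true by (symmetry; apply Nat.leb_le; lia).
    symmetry; apply pascal, Hkn.
  - rewrite !binom_diag, binom_gt by lia; ring.
  - rewrite !binom_gt by lia; ring.
Qed.

Lemma binom_central m : binom (2*m+2) (m+1) = 2 * binom (2*m+1) m.
Proof.
  replace (2*m+2)%nat with (S (2*m+1)) by lia. replace (m+1)%nat with (S m) by lia.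
  rewrite binom_pascal, !binom_fact by lia.
  replace (2*m+1 - m)%nat with (S m) by lia.
  replace (2*m+1 - S m)%nat with m by lia.
  field; split; apply INR_fact_neq_0.
Qed.

Definition u (k : nat) : R := Re (Cpow (1, -1) k).
Definition v (k : nat) : R := Im (Cpow (1, -1) k).

Lemma u_S k : u (S k) = u k + v k.
Proof. unfold u, v, Re, Im; simpl; ring. Qed.

Lemma v_S k : v (S k) = v k - u k.
Proof. unfold u, v, Re, Im; simpl; ring. Qed.

Lemma u_0 : u 0 = 1.
Proof. reflexivity. Qed.

Lemma v_0 : v 0 = 0.
Proof. reflexivity. Qed.

Lemma pow1mi_polar k :
  (-1)^k * Rpower 2 (INR k / 2) * cos (3 * INR k * PI / 4) = u k /\
  (-1)^k * Rpower 2 (INR k / 2) * sin (3 * INR k * PI / 4) = v k.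
Proof.
  induction k as [|k [IHu IHv]].
  - replace (INR 0 / 2) with 0 by (simpl; field).
    replace (3 * INR 0 * PI / 4) with 0 by (simpl; field).
    rewrite Rpower_O, cos_0, sin_0, u_0, v_0 by lra; split; ring.
  - rewrite S_INR.
    replace ((INR k + 1) / 2) with (INR k / 2 + / 2) by field.
    replace (3 * (INR k + 1) * PI / 4) with (3 * INR k * PI / 4 + 3 * (PI / 4)) by field.
    rewrite Rpower_plus, Rpower_sqrt, cos_plus, sin_plus, cos_3PI4, sin_3PI4 by lra.
    rewrite u_S, v_S, <- IHu, <- IHv; simpl pow.
    pose proof sqrt2_neq_0.
    split; field; assumption.
Qed.

(* Abel summation against Pascal's rule. *)
Lemma rsum_binom_diff (e : nat -> R) m :
  rsum (fun k => binom (2*m+2-k) (S m) * (e (S k) - e k)) (S (S m))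
  = rsum (fun k => binom (2*m-k) m * e (S (S k))) (S m)
    + binom (2*m+1) m * (e 1%nat - 2 * e O).
Proof.
  rewrite (rsum_ext _ (fun k => binom (2*m+2-k) (S m) * e (S k)
                                - binom (2*m+2-k) (S m) * e k)) by (intros; ring).
  rewrite rsum_minus.
  assert (Hhi : rsum (fun k => binom (2*m+2-k) (S m) * e (S k)) (S (S m)) =
     rsum (fun k => binom (2*m+1-k) m * e (S k) + binom (2*m+1-k) (S m) * e (S k)) (S m)
     + e (S (S m))).
  { rewrite (rsum_S _ (S m)). f_equal.
    - apply rsum_ext; intros k Hk.
      replace (2*m+2-k)%nat with (S (2*m+1-k)) by lia. rewrite binom_pascal; ring.
    - replace (2*m+2 - S m)%nat with (S m) by lia. rewrite binom_diag; ring. }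
  assert (Hlo : rsum (fun k => binom (2*m+2-k) (S m) * e k) (S (S m)) =
     binom (2*m+2) (m+1) * e O + rsum (fun k => binom (2*m+1-k) (S m) * e (S k)) (S m)).
  { rewrite rsum_Sl. replace (2*m+2-0)%nat with (2*m+2)%nat by lia.
    replace (m+1)%nat with (S m) by lia. f_equal.
    apply rsum_ext; intros k Hk. replace (2*m+2 - S k)%nat with (2*m+1-k)%nat by lia.
    reflexivity. }
  rewrite Hhi, Hlo, rsum_plus, binom_central, rsum_Sl.
  replace (2*m+1-0)%nat with (2*m+1)%nat by lia.
  rewrite (rsum_ext (fun k => binom (2*m+1 - S k) m * e (S (S k)))
                    (fun k => binom (2*m - k) m * e (S (S k))))
    by (intros; f_equal; f_equal; lia).
  rewrite (rsum_S (fun k => binom (2*m-k) m * e (S (S k))) m).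
  replace (2*m - m)%nat with m by lia. rewrite binom_diag.
  ring.
Qed.

Lemma binom_sum_pow1mi n :
  rsum (fun j => binom (2*n - j) n * (u j + v j)) (S n) = 2 ^ n.
Proof.
  induction n as [|m IH].
  - simpl; rewrite binom_diag, u_0, v_0; ring.
  - (* [u + v] is the difference sequence of [e := u - v], and [e (S (S k)) = 2 (u k + v k)]. *)
    pose (e k := u k - v k).
    rewrite (rsum_ext _ (fun k => binom (2*m+2-k) (S m) * (e (S k) - e k))).
    2:{ intros k Hk. unfold e. rewrite u_S, v_S. f_equal; [f_equal; lia | ring]. }
    rewrite rsum_binom_diff. unfold e.
    replace (u 1%nat - v 1%nat - 2 * (u O - v O)) with 0
      by (rewrite u_S, v_S, u_0, v_0; ring).
    change (2 ^ S m) with (2 * 2 ^ m).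
    rewrite Rmult_0_r, Rplus_0_r, <- IH, <- rsum_scal.
    apply rsum_ext; intros k Hk.
    rewrite !u_S, !v_S, !u_S; ring.
Qed.

Definition vsum n := rsum (fun j => binom (2*n - S j) n * v (S j) / INR (S j)) n.

Lemma vsum_rec_coef n j : (j < n)%nat ->
  INR (S n) * binom (2 * S n - S j) (S n) / INR (S j)
  - 2 * (2 * INR n + 1) * binom (2*n - S j) n / INR (S j)
  = binom (2*n-1-j) (n-1) - binom (2*n-1-j) n.
Proof.
  intros Hj. destruct (Nat.le_exists_sub (S j) n) as [m [Hm _]]; [lia|]. subst n.
  rewrite !binom_fact by lia.
  replace (2 * S (m + S j) - S j)%nat with (S (S (j + 2*m + 1))) by lia.
  replace (2 * (m + S j) - S j)%nat with (j + 2*m + 1)%nat by lia.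
  replace (2 * (m + S j) - 1 - j)%nat with (j + 2*m + 1)%nat by lia.
  replace (m + S j - 1)%nat with (j + m)%nat by lia.
  replace (S (S (j + 2*m + 1)) - S (m + S j))%nat with (S m) by lia.
  replace (j + 2*m + 1 - (m + S j))%nat with m by lia.
  replace (j + 2*m + 1 - (j + m))%nat with (S m) by lia.
  replace (m + S j)%nat with (S (j + m)) by lia.
  rewrite !fact_simpl, !mult_INR, !S_INR, !plus_INR, !mult_INR.
  pose proof (INR_fact_lt_0 (j + 2*m + 1)). pose proof (INR_fact_lt_0 (j + m)).
  pose proof (INR_fact_lt_0 m). pose proof (pos_INR j). pose proof (pos_INR m).
  simpl (INR 2); simpl (INR 1).
  field; repeat split; lra.
Qed.

Lemma vsum_rec_term n j : (1 <= n)%nat -> (j <= n)%nat ->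
  INR (S n) * (binom (2 * S n - S j) (S n) * v (S j) / INR (S j))
  - 2 * (2 * INR n + 1) * (binom (2*n - S j) n * v (S j) / INR (S j))
  = (binom (2*n-1-j) (n-1) - binom (2*n-1-j) n) * v (S j).
Proof.
  intros Hn Hj.
  destruct (Nat.eq_dec j n) as [->|Hne].
  - replace (2 * S n - S n)%nat with (S n) by lia.
    replace (2*n - S n)%nat with (n-1)%nat by lia.
    replace (2*n-1-n)%nat with (n-1)%nat by lia.
    rewrite !binom_diag, (binom_gt (n-1) n) by lia.
    field; apply not_0_INR; lia.
  - rewrite <- vsum_rec_coef by lia. field; apply not_0_INR; lia.
Qed.

Lemma rsum_binom_diff_v n : (1 <= n)%nat ->
  rsum (fun j => (binom (2*n-1-j) (n-1) - binom (2*n-1-j) n) * v (S j)) (S n) = - 2 ^ n.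
Proof.
  intros Hn.
  rewrite (rsum_ext _ (fun j => binom (2*n-j) n * (v j - u j)
                                - 2 * (binom (2*n-1-j) n * v (S j)))).
  2:{ intros j Hj. destruct n as [|p]; [lia|].
      replace (2 * S p - j)%nat with (S (2 * S p - 1 - j)) by lia.
      replace (S p - 1)%nat with p by lia.
      rewrite binom_pascal, v_S; ring. }
  rewrite rsum_minus, rsum_scal.
  assert (Hshift : rsum (fun j => binom (2*n-1-j) n * v (S j)) (S n)
                   = rsum (fun j => binom (2*n-j) n * v j) (S n)).
  { rewrite rsum_S, rsum_Sl, v_0.
    replace (2*n-1-n)%nat with (n-1)%nat by lia. rewrite (binom_gt (n-1) n) by lia.
    rewrite Rmult_0_r, Rmult_0_l, Rplus_0_r, Rplus_0_l.
    apply rsum_ext; intros j Hj. do 2 f_equal. lia. }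
  rewrite Hshift, <- (binom_sum_pow1mi n).
  replace (- rsum _ (S n))
    with (rsum (fun j => -1 * (binom (2*n-j) n * (u j + v j))) (S n)) by (rewrite rsum_scal; ring).
  rewrite <- rsum_scal, <- rsum_minus.
  apply rsum_ext; intros j Hj; ring.
Qed.

Lemma vsum_rec n : INR (S n) * vsum (S n) = 2 * (2 * INR n + 1) * vsum n - 2 ^ n.
Proof.
  destruct n as [|p].
  { unfold vsum; simpl rsum. replace (2*1 - 1)%nat with 1%nat by lia.
    rewrite binom_diag, v_S, u_0, v_0; simpl; field. }
  set (n := S p).
  assert (Hn : (1 <= n)%nat) by (unfold n; lia).
  assert (Hcur : 2 * (2 * INR n + 1) * vsum n =
    rsum (fun j => 2 * (2 * INR n + 1) * (binom (2*n - S j) n * v (S j) / INR (S j))) (S n)).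
  { unfold vsum. rewrite rsum_S, rsum_scal.
    replace (2*n - S n)%nat with (n-1)%nat by lia. rewrite (binom_gt (n-1) n) by lia.
    unfold Rdiv; ring. }
  assert (Hnext : INR (S n) * vsum (S n) =
    rsum (fun j => INR (S n) * (binom (2 * S n - S j) (S n) * v (S j) / INR (S j))) (S n)).
  { unfold vsum. rewrite rsum_scal. reflexivity. }
  enough (INR (S n) * vsum (S n) - 2 * (2 * INR n + 1) * vsum n = - 2 ^ n) by lra.
  rewrite Hcur, Hnext, <- rsum_minus, <- (rsum_binom_diff_v n Hn).
  apply rsum_ext; intros j Hj. apply vsum_rec_term; lia.
Qed.

Definition moment n :=
  INR (odd_dfact n) / (2 ^ n * INR (Factorial.fact n)) * (PI / 4) + vsum n / 4 ^ n.

Lemma coef3p2_moment n : coef3p2 n = (-1) ^ n * moment n.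
Proof.
  assert (Hsum : sum_1_to (fun k => (-1) ^ k * Binomial.C (2 * n - k) n
                                    * Rpower 2 (INR k / 2) / INR k
                                    * sin (3 * INR k * PI / 4)) n = vsum n).
  { rewrite sum_1_to_rsum. apply rsum_ext; intros j Hj.
    rewrite <- (proj2 (pow1mi_polar (S j))), binom_fact by lia.
    unfold Binomial.C. field.
    split; [|split]; [apply INR_fact_neq_0 | apply INR_fact_neq_0 | apply not_0_INR; lia]. }
  unfold coef3p2, moment. rewrite Hsum.
  pose proof (INR_fact_lt_0 n). assert (0 < 2 ^ n) by (apply pow_lt; lra).
  replace (4 ^ n) with (2 ^ n * 2 ^ n) by (rewrite <- Rpow_mult_distr; f_equal; ring).
  field; lra.
Qed.

Lemma moment_rec n :
  2 * INR (S n) * moment (S n) = (2 * INR n + 1) * moment n - / 2 ^ (S n).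
Proof.
  assert (Hnext : vsum (S n) = (2 * (2 * INR n + 1) * vsum n - 2 ^ n) / INR (S n)).
  { rewrite <- vsum_rec. field. apply not_0_INR; lia. }
  unfold moment. rewrite Hnext, fact_simpl.
  change (odd_dfact (S n)) with ((2 * n + 1) * odd_dfact n)%nat.
  rewrite !mult_INR, plus_INR, mult_INR, S_INR.
  pose proof (INR_fact_lt_0 n). assert (0 < 2 ^ n) by (apply pow_lt; lra).
  pose proof (pos_INR n).
  change (4 ^ S n) with (4 * 4 ^ n); change (2 ^ S n) with (2 * 2 ^ n).
  replace (4 ^ n) with (2 ^ n * 2 ^ n) by (rewrite <- Rpow_mult_distr; f_equal; ring).
  simpl (INR 2); simpl (INR 1).
  field; lra.
Qed.

Definition kernel (n : nat) (t : R) : R := t ^ (2*n) / (1 + t^2) ^ (S n).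

(* In the shape of the side conditions generated by [auto_derive]. *)
Lemma one_plus_sq_pow_neq_0 t n : (1 + t * (t * 1)) ^ n <> 0.
Proof. apply pow_nonzero; nra. Qed.

Lemma kernel_continuous n t : continuous (kernel n) t.
Proof.
  apply (@ex_derive_continuous R_AbsRing R_NormedModule); unfold kernel.
  auto_derive. apply (one_plus_sq_pow_neq_0 t (S n)).
Qed.

Lemma is_derive_kernel_primitive n t :
  is_derive (fun t => t ^ (2*n+1) / (1 + t^2) ^ (S n)) t
            ((2 * INR n + 1) * kernel n t - 2 * INR (S n) * kernel (S n) t).
Proof.
  auto_derive; [apply (one_plus_sq_pow_neq_0 t (S n))|].
  replace (match n with O => 1 | S _ => INR n + 1 end) with (INR n + 1)
    by (destruct n; simpl; ring).
  replace (n + (n + 0) + 1)%nat with (S (2*n)) by lia.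
  unfold kernel. replace (2 * S n)%nat with (S (S (2*n))) by lia.
  simpl pred. rewrite S_INR, mult_INR. simpl (INR 2).
  assert (0 < 1 + t^2) by nra. assert (0 < (1 + t^2)^n) by (apply pow_lt; lra).
  simpl pow in *. rewrite S_INR.
  match goal with |- ?a = ?b => change (@eq R a b) end.
  field. lra.
Qed.

(* The primitive [t^(2n+1) / (1 + t^2)^(n+1)] increases by [1 / 2^(n+1)] over [0, 1]. *)
Lemma is_RInt_kernel_S n (l : R) : is_RInt (kernel n) 0 1 l ->
  is_RInt (kernel (S n)) 0 1 (((2 * INR n + 1) * l - / 2 ^ S n) / (2 * INR (S n))).
Proof.
  intros Hl.
  assert (HD : is_RInt (fun t => (2 * INR n + 1) * kernel n t - 2 * INR (S n) * kernel (S n) t)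
                 0 1 (minus (1 ^ (2*n+1) / (1 + 1^2) ^ (S n)) (0 ^ (2*n+1) / (1 + 0^2) ^ (S n)))).
  { apply (is_RInt_derive (fun t => t ^ (2*n+1) / (1 + t^2) ^ (S n))).
    - intros t _. apply is_derive_kernel_primitive.
    - intros t _. apply (@ex_derive_continuous R_AbsRing R_NormedModule); unfold kernel.
      auto_derive. split; [apply (one_plus_sq_pow_neq_0 t (S n))|].
      split; [apply (one_plus_sq_pow_neq_0 t (S (S n)))|]. exact I. }
  pose proof (is_RInt_scal _ _ _ (/ (2 * INR (S n))) _
                (is_RInt_minus _ _ _ _ _ _ (is_RInt_scal _ _ _ (2 * INR n + 1) _ Hl) HD)) as HS.
  assert (Hn : 0 < INR n + 1) by (rewrite <- S_INR; apply lt_0_INR; lia).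
  rewrite S_INR in HS |- *.
  match type of HS with
  | is_RInt _ _ _ ?v => replace (((2 * INR n + 1) * l - / 2 ^ S n) / (2 * (INR n + 1))) with v
  end.
  - eapply is_RInt_ext; [|exact HS]. intros t _.
    unfold scal, minus, plus, opp, mult; simpl; unfold mult; simpl.
    match goal with |- ?a = ?b => change (@eq R a b) end.
    field. lra.
  - unfold scal, minus, plus, opp, mult; simpl; unfold mult; simpl.
    rewrite pow1, pow_i by lia.
    replace (1 + 1 * (1 * 1)) with 2 by ring. replace (1 + 0 * (0 * 1)) with 1 by ring.
    rewrite pow1. field. split; [apply pow_nonzero|]; lra.
Qed.

Lemma is_RInt_kernel n : is_RInt (kernel n) 0 1 (moment n).
Proof.
  induction n as [|n IH].
  - replace (moment 0) with (minus (atan 1) (atan 0)).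
    + apply (is_RInt_derive atan (kernel 0)).
      * intros t _.
        replace (kernel 0 t) with (/ (1 + t²)) by (unfold kernel, Rsqr; simpl; field; nra).
        apply is_derive_atan.
      * intros t _. apply kernel_continuous.
    + rewrite atan_1, atan_0. unfold moment, vsum, minus, plus, opp; simpl. field.
  - replace (moment (S n)) with (((2 * INR n + 1) * moment n - / 2 ^ S n) / (2 * INR (S n))).
    + apply is_RInt_kernel_S, IH.
    + rewrite <- moment_rec. field. apply not_0_INR; lia.
Qed.

Fixpoint csum (f : nat -> C) (n : nat) : C :=
  match n with O => RtoC 0 | S m => Cplus (csum f m) (f m) end.

Lemma fst_csum_RtoC_mult (r : nat -> R) (z : nat -> C) n :
  fst (csum (fun k => Cmult (RtoC (r k)) (z k)) n) = rsum (fun k => r k * fst (z k)) n.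
Proof. induction n as [|n IH]; simpl; [|rewrite IH]; ring. Qed.

Lemma snd_csum_RtoC_mult (r : nat -> R) (z : nat -> C) n :
  snd (csum (fun k => Cmult (RtoC (r k)) (z k)) n) = rsum (fun k => r k * snd (z k)) n.
Proof. induction n as [|n IH]; simpl; [|rewrite IH]; ring. Qed.

Lemma sum_n_csum (f : nat -> C) n : sum_n f n = csum f (S n).
Proof.
  induction n as [|n IH].
  - rewrite sum_O. apply injective_projections; simpl; ring.
  - rewrite sum_Sn, IH. reflexivity.
Qed.

Lemma is_RInt_rsum (f : nat -> R -> R) (l : nat -> R) a b M :
  (forall n, is_RInt (f n) a b (l n)) ->
  is_RInt (fun t => rsum (fun n => f n t) M) a b (rsum l M).
Proof.
  intros Hf. induction M as [|M IH].
  - pose proof (is_RInt_const a b (0 : R)) as H0.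
    match type of H0 with is_RInt _ _ _ ?v => replace v with 0 in H0 end; [exact H0|].
    unfold scal; simpl; unfold mult; simpl; ring.
  - apply (is_RInt_plus _ _ _ _ _ _ IH (Hf M)).
Qed.

Lemma norm_prod_Cmod (p : C) :
  @norm R_AbsRing (prod_NormedModule R_AbsRing R_NormedModule R_NormedModule) p = Cmod p.
Proof.
  unfold norm; simpl. unfold prod_norm, Cmod; simpl.
  assert (E : forall r : R, norm r * (norm r * 1) = r * (r * 1)).
  { intro r. change (norm r) with (Rabs r). rewrite !Rmult_1_r, <- Rabs_mult.
    apply Rabs_pos_eq. nra. }
  rewrite !E. reflexivity.
Qed.

Lemma Cmod_is_RInt_le (rho : R -> C) (lu lv M : R) :
  is_RInt (fun t => fst (rho t)) 0 1 lu -> is_RInt (fun t => snd (rho t)) 0 1 lv ->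
  (forall t, 0 <= t <= 1 -> Cmod (rho t) <= M) -> Cmod (lu, lv) <= M.
Proof.
  intros Hu Hv Hbd.
  rewrite <- norm_prod_Cmod, <- (Rmult_1_l M).
  replace 1 with (1 - 0) by ring.
  apply (norm_RInt_le_const rho); [lra| |exact (is_RInt_fct_extend_pair rho 0 1 lu lv Hu Hv)].
  intros t Ht. rewrite norm_prod_Cmod. apply Hbd, Ht.
Qed.

Lemma Clog_right_half_plane X Y : 0 < X -> Clog (X, Y) = (ln (X^2 + Y^2) / 2, atan (Y / X)).
Proof.
  intros HX. unfold Clog, Carg, Re, Im; simpl fst; simpl snd.
  destruct (Rlt_dec 0 X); [|lra]. f_equal.
  unfold Cmod; simpl fst; simpl snd.
  assert (Hs : 0 < sqrt (X^2 + Y^2)) by (apply sqrt_lt_R0; nra).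
  rewrite <- (sqrt_sqrt (X^2 + Y^2)) at 2 by nra.
  rewrite ln_mult by lra. field.
Qed.

Lemma is_RInt_remainder_component (h : R -> R) (l : R) (x : nat -> R) M :
  is_RInt h 0 1 l ->
  is_RInt (fun t => h t - rsum (fun n => kernel n t * x n) M) 0 1
          (l - rsum (fun n => moment n * x n) M).
Proof.
  intros Hh. apply (is_RInt_minus _ _ _ _ _ _ Hh).
  apply (is_RInt_rsum (fun n t => kernel n t * x n)). intros n.
  apply (is_RInt_ext (fun t => scal (x n) (kernel n t))).
  - intros t _. unfold scal; simpl; unfold mult; simpl. apply Rmult_comm.
  - replace (moment n * x n) with (scal (x n) (moment n))
      by (unfold scal; simpl; unfold mult; simpl; apply Rmult_comm).
    exact (@is_RInt_scal R_NormedModule (kernel n) 0 1 (x n) (moment n) (is_RInt_kernel n)).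
Qed.

Lemma kernel_geometric n t : kernel n t = / (1 + t^2) * (t^2 / (1 + t^2)) ^ n.
Proof.
  unfold kernel. assert (0 < 1 + t^2) by nra. assert (0 < (1 + t^2) ^ n) by (apply pow_lt; lra).
  rewrite pow_mult. change ((1 + t^2) ^ S n) with ((1 + t^2) * (1 + t^2) ^ n).
  unfold Rdiv. rewrite Rpow_mult_distr, pow_inv.
  field. lra.
Qed.

Section Arctan_integral.

Variables a b : R.
Hypothesis Hre : 0 < a^2 - b^2.
Hypothesis Hb : b^2 < 1.

Let Hab : 0 < a^2 + b^2.
Proof. nra. Qed.

Lemma one_pm_tb_pos t : 0 <= t <= 1 -> 0 < 1 + t*b /\ 0 < 1 - t*b.
Proof.
  intros Ht. assert (-1 < b < 1) by (split; nra).
  assert (0 <= (1 - t) * (1 - b)) by (apply Rmult_le_pos; lra).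
  assert (0 <= (1 - t) * (1 + b)) by (apply Rmult_le_pos; lra).
  split; nra.
Qed.

(* With [w = a + i b]: [N1 t = |1 - i t w|^2], [N2 t = |1 + i t w|^2], and [arctan_re t],
   [arctan_im t] are the real and imaginary parts of [Catan (t w) / w]. *)
Definition N1 t := (1 + t*b)^2 + (t*a)^2.
Definition N2 t := (1 - t*b)^2 + (t*a)^2.
Definition dlog_re t := (ln (N1 t) - ln (N2 t)) / 2.
Definition dlog_im t := atan (- (t*a) / (1 + t*b)) - atan ((t*a) / (1 - t*b)).
Definition arctan_re t := (b * dlog_re t - a * dlog_im t) / (2 * (a^2 + b^2)).
Definition arctan_im t := (a * dlog_re t + b * dlog_im t) / (2 * (a^2 + b^2)).

(* [den t = |1 + w^2 t^2|^2] and [inv_C t = 1 / (1 + w^2 t^2)]. *)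
Definition den t := (1 + (a^2 - b^2) * t^2)^2 + (2*a*b*t^2)^2.
Definition inv_re t := (1 + (a^2 - b^2) * t^2) / den t.
Definition inv_im t := - (2*a*b*t^2) / den t.
Definition inv_C t : C := (inv_re t, inv_im t).

Lemma den_eq t : den t = N1 t * N2 t.
Proof. unfold den, N1, N2; ring. Qed.

Lemma den_ge_1 t : 1 <= den t.
Proof.
  unfold den. assert (0 <= (a^2 - b^2) * t^2) by (apply Rmult_le_pos; nra). nra.
Qed.

Lemma is_derive_arctan_re t : 0 <= t <= 1 -> is_derive arctan_re t (inv_re t).
Proof.
  intros Ht. destruct (one_pm_tb_pos t Ht) as [H1 H2].
  assert (0 < N1 t) by (unfold N1; nra). assert (0 < N2 t) by (unfold N2; nra).
  unfold arctan_re, dlog_re, dlog_im, inv_re. rewrite den_eq. unfold N1, N2 in *.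
  auto_derive; [repeat split; lra|].
  match goal with |- ?l = ?r => change (@eq R l r) end.
  field; repeat split; lra.
Qed.

Lemma is_derive_arctan_im t : 0 <= t <= 1 -> is_derive arctan_im t (inv_im t).
Proof.
  intros Ht. destruct (one_pm_tb_pos t Ht) as [H1 H2].
  assert (0 < N1 t) by (unfold N1; nra). assert (0 < N2 t) by (unfold N2; nra).
  unfold arctan_im, dlog_re, dlog_im, inv_im. rewrite den_eq. unfold N1, N2 in *.
  auto_derive; [repeat split; lra|].
  match goal with |- ?l = ?r => change (@eq R l r) end.
  field; repeat split; lra.
Qed.

Lemma inv_re_continuous t : continuous inv_re t.
Proof.
  pose proof (den_ge_1 t). apply (@ex_derive_continuous R_AbsRing R_NormedModule).
  unfold inv_re, den in *. auto_derive. lra.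
Qed.

Lemma inv_im_continuous t : continuous inv_im t.
Proof.
  pose proof (den_ge_1 t). apply (@ex_derive_continuous R_AbsRing R_NormedModule).
  unfold inv_im, den in *. auto_derive. lra.
Qed.

Lemma arctan_re_0 : arctan_re 0 = 0.
Proof.
  unfold arctan_re, dlog_re, dlog_im, N1, N2.
  replace (- (0*a) / (1 + 0*b)) with 0 by field. replace (0*a / (1 - 0*b)) with 0 by field.
  replace ((1 + 0*b)^2 + (0*a)^2) with 1 by ring. replace ((1 - 0*b)^2 + (0*a)^2) with 1 by ring.
  rewrite atan_0, ln_1. unfold Rdiv; ring.
Qed.

Lemma arctan_im_0 : arctan_im 0 = 0.
Proof.
  unfold arctan_im, dlog_re, dlog_im, N1, N2.
  replace (- (0*a) / (1 + 0*b)) with 0 by field. replace (0*a / (1 - 0*b)) with 0 by field.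
  replace ((1 + 0*b)^2 + (0*a)^2) with 1 by ring. replace ((1 - 0*b)^2 + (0*a)^2) with 1 by ring.
  rewrite atan_0, ln_1. unfold Rdiv; ring.
Qed.

Lemma Catan_div_eq : Cdiv (Catan (a, b)) (a, b) = (arctan_re 1, arctan_im 1).
Proof.
  destruct (one_pm_tb_pos 1) as [H1 H2]; [lra|].
  unfold Catan.
  replace (Cminus (RtoC 1) (Cmult Ci (a, b))) with (1 + b, -a)
    by (apply injective_projections; simpl; ring).
  replace (Cplus (RtoC 1) (Cmult Ci (a, b))) with (1 - b, a)
    by (apply injective_projections; simpl; ring).
  rewrite !Clog_right_half_plane by lra. replace ((-a)^2) with (a^2) by ring.
  unfold arctan_re, arctan_im, dlog_re, dlog_im, N1, N2. rewrite !Rmult_1_l.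
  apply injective_projections; simpl;
    match goal with |- ?l = ?r => change (@eq R l r) end;
    field; lra.
Qed.

Lemma is_RInt_inv_re : is_RInt inv_re 0 1 (fst (Cdiv (Catan (a, b)) (a, b))).
Proof.
  rewrite Catan_div_eq. simpl fst. replace (arctan_re 1) with (minus (arctan_re 1) (arctan_re 0))
    by (rewrite arctan_re_0; exact (Rminus_0_r _)).
  apply (is_RInt_derive arctan_re inv_re 0 1).
  - intros t Ht. rewrite Rmin_left, Rmax_right in Ht by lra. apply is_derive_arctan_re, Ht.
  - intros t _. apply inv_re_continuous.
Qed.

Lemma is_RInt_inv_im : is_RInt inv_im 0 1 (snd (Cdiv (Catan (a, b)) (a, b))).
Proof.
  rewrite Catan_div_eq. simpl snd. replace (arctan_im 1) with (minus (arctan_im 1) (arctan_im 0))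
    by (rewrite arctan_im_0; exact (Rminus_0_r _)).
  apply (is_RInt_derive arctan_im inv_im 0 1).
  - intros t Ht. rewrite Rmin_left, Rmax_right in Ht by lra. apply is_derive_arctan_im, Ht.
  - intros t _. apply inv_im_continuous.
Qed.

Definition one_sub_w2 : C := (1 - (a^2 - b^2), - (2*a*b)).
Definition geom_ratio t : C := Cmult one_sub_w2 (RtoC (t^2 / (1 + t^2))).

Lemma inv_C_factor t : RtoC (/ (1 + t^2)) = Cmult (Cminus (RtoC 1) (geom_ratio t)) (inv_C t).
Proof.
  pose proof (den_ge_1 t). assert (0 < 1 + t^2) by nra.
  unfold geom_ratio, one_sub_w2, inv_C, inv_re, inv_im, den in *.
  apply injective_projections; simpl;
    match goal with |- ?l = ?r => change (@eq R l r) end;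
    field; split; lra.
Qed.

Lemma csum_kernel t M :
  csum (fun n => Cmult (RtoC (kernel n t)) (Cpow one_sub_w2 n)) M
  = Cmult (Cminus (RtoC 1) (Cpow (geom_ratio t) M)) (inv_C t).
Proof.
  induction M as [|M IH].
  - apply injective_projections; simpl; ring.
  - simpl csum. rewrite IH, kernel_geometric, RtoC_mult, inv_C_factor, RtoC_pow.
    unfold geom_ratio. rewrite !Cpow_mult_l, !Cpow_S. ring.
Qed.

Lemma Cmod_inv_C_le_1 t : Cmod (inv_C t) <= 1.
Proof.
  pose proof (den_ge_1 t).
  unfold inv_C, Cmod; simpl fst; simpl snd.
  rewrite <- sqrt_1. apply sqrt_le_1_alt.
  replace (inv_re t ^ 2 + inv_im t ^ 2) with (/ den t).
  - rewrite <- Rinv_1. apply Rinv_le_contravar; lra.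
  - unfold inv_re, inv_im, den in *. field. lra.
Qed.

Lemma Cmod_geom_ratio_le t : Cmod (geom_ratio t) <= Cmod one_sub_w2.
Proof.
  unfold geom_ratio. rewrite Cmod_mult, Cmod_R.
  pose proof (Cmod_ge_0 one_sub_w2). assert (0 < 1 + t^2) by nra.
  assert (Rabs (t^2 / (1 + t^2)) <= 1).
  { rewrite Rabs_pos_eq by (apply Rdiv_le_0_compat; nra).
    apply (Rmult_le_reg_r (1 + t^2)); [lra|]. field_simplify; lra. }
  rewrite <- (Rmult_1_r (Cmod one_sub_w2)) at 2. apply Rmult_le_compat_l; assumption.
Qed.

Lemma Cmod_geometric_remainder_le t M :
  Cmod (Cminus (inv_C t) (csum (fun n => Cmult (RtoC (kernel n t)) (Cpow one_sub_w2 n)) M))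
  <= Cmod one_sub_w2 ^ M.
Proof.
  rewrite csum_kernel.
  replace (Cminus (inv_C t) (Cmult (Cminus (RtoC 1) (Cpow (geom_ratio t) M)) (inv_C t)))
    with (Cmult (Cpow (geom_ratio t) M) (inv_C t)) by ring.
  rewrite Cmod_mult, Cmod_pow, <- (Rmult_1_r (Cmod one_sub_w2 ^ M)).
  pose proof (Cmod_ge_0 (geom_ratio t)). pose proof (Cmod_ge_0 (inv_C t)).
  apply Rmult_le_compat; [apply pow_le; assumption | assumption | |apply Cmod_inv_C_le_1].
  apply pow_incr. split; [assumption|apply Cmod_geom_ratio_le].
Qed.

Lemma Cmod_partial_sum_error M :
  Cmod (Cminus (csum (fun n => Cmult (RtoC (moment n)) (Cpow one_sub_w2 n)) M)
               (Cdiv (Catan (a, b)) (a, b)))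
  <= Cmod one_sub_w2 ^ M.
Proof.
  set (L := Cdiv (Catan (a, b)) (a, b)).
  rewrite <- Cmod_opp.
  replace (Copp (Cminus (csum (fun n => Cmult (RtoC (moment n)) (Cpow one_sub_w2 n)) M) L))
    with (fst L - rsum (fun n => moment n * fst (Cpow one_sub_w2 n)) M,
          snd L - rsum (fun n => moment n * snd (Cpow one_sub_w2 n)) M).
  2:{ apply injective_projections;
      change (fst (Copp ?x)) with (- fst x); change (snd (Copp ?x)) with (- snd x);
      change (fst (Cminus ?x ?y)) with (fst x - fst y);
      change (snd (Cminus ?x ?y)) with (snd x - snd y);
      rewrite ?fst_csum_RtoC_mult, ?snd_csum_RtoC_mult; simpl; ring. }
  apply (Cmod_is_RInt_le (fun t => Cminus (inv_C t)
           (csum (fun n => Cmult (RtoC (kernel n t)) (Cpow one_sub_w2 n)) M))).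
  - apply (is_RInt_ext
             (fun t => inv_re t - rsum (fun n => kernel n t * fst (Cpow one_sub_w2 n)) M)).
    + intros t _. change (fst (Cminus ?x ?y)) with (fst x - fst y).
      rewrite fst_csum_RtoC_mult. reflexivity.
    + apply is_RInt_remainder_component, is_RInt_inv_re.
  - apply (is_RInt_ext
             (fun t => inv_im t - rsum (fun n => kernel n t * snd (Cpow one_sub_w2 n)) M)).
    + intros t _. change (snd (Cminus ?x ?y)) with (snd x - snd y).
      rewrite snd_csum_RtoC_mult. reflexivity.
    + apply is_RInt_remainder_component, is_RInt_inv_im.
  - intros t _. apply Cmod_geometric_remainder_le.
Qed.

End Arctan_integral.

Lemma coef3p2_term a b n :
  Cmult (RtoC (coef3p2 n)) (Cpow (Cminus (Cmult (a, b) (a, b)) (RtoC 1)) n)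
  = Cmult (RtoC (moment n)) (Cpow (one_sub_w2 a b) n).
Proof.
  rewrite coef3p2_moment, RtoC_mult, RtoC_pow.
  replace (one_sub_w2 a b) with (Cmult (RtoC (-1)) (Cminus (Cmult (a, b) (a, b)) (RtoC 1)))
    by (apply injective_projections; unfold one_sub_w2; simpl; ring).
  rewrite Cpow_mult_l. ring.
Qed.

Lemma is_series_of_Cmod_error_le (f : nat -> C) (l : C) (r : R) :
  0 <= r < 1 -> (forall N, Cmod (Cminus (sum_n f N) l) <= r ^ S N) -> is_series f l.
Proof.
  intros Hr Herr.
  apply (filterlim_locally_ball_norm (K := C_AbsRing) (U := C_NormedModule)). intros eps.
  assert (Hr0 : Rabs r < 1) by (rewrite Rabs_pos_eq; lra).
  destruct (pow_lt_1_zero _ Hr0 eps (cond_pos eps)) as [N HN].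
  exists N. intros n Hn.
  apply (Rle_lt_trans _ _ _ (Herr n)).
  specialize (HN (S n) ltac:(lia)).
  rewrite Rabs_pos_eq in HN by (apply pow_le; lra). exact HN.
Qed.

Lemma is_series_Catan_div (w : C) : Cmod (Cminus (Cmult w w) (RtoC 1)) < 1 ->
  is_series (fun n => Cmult (RtoC (coef3p2 n)) (Cpow (Cminus (Cmult w w) (RtoC 1)) n))
            (Cdiv (Catan w) w).
Proof.
  destruct w as [a b]. intros Hw.
  assert (Hr : Cmod (one_sub_w2 a b) < 1).
  { replace (one_sub_w2 a b) with (Copp (Cminus (Cmult (a, b) (a, b)) (RtoC 1)))
      by (apply injective_projections; unfold one_sub_w2; simpl; ring).
    rewrite Cmod_opp; exact Hw. }
  assert (Hdisk : Re (one_sub_w2 a b) ^ 2 + Im (one_sub_w2 a b) ^ 2 < 1).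
  { rewrite <- Cmod2_alt. pose proof (Cmod_ge_0 (one_sub_w2 a b)). nra. }
  unfold one_sub_w2, Re, Im in Hdisk; simpl fst in Hdisk; simpl snd in Hdisk.
  assert (Hre : 0 < a^2 - b^2) by nra.
  assert (Hb : b^2 < 1).
  { destruct (Rlt_or_le (b^2) 1) as [|Hb]; [assumption|].
    assert (1 <= a^2) by lra. nra. }
  apply (is_series_of_Cmod_error_le _ _ (Cmod (one_sub_w2 a b)));
    [split; [apply Cmod_ge_0 | exact Hr]|].
  intros N. rewrite (sum_n_ext _ _ _ (coef3p2_term a b)), sum_n_csum.
  apply Cmod_partial_sum_error; assumption.
Qed.

Lemma Csqrt_sqr (z : C) : 0 < Re z -> Cmult (Csqrt z) (Csqrt z) = z.
Proof.
  destruct z as [x y]. unfold Re; simpl fst. intros Hx.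
  unfold Csqrt, Carg, Re, Im; simpl fst; simpl snd.
  destruct (Rlt_dec 0 x) as [_|]; [|lra].
  set (th := atan (y / x)). set (r := Cmod (x, y)).
  assert (Hr2 : r * r = x^2 + y^2).
  { unfold r, Cmod; simpl fst; simpl snd. apply sqrt_sqrt. nra. }
  assert (Hr : 0 < r) by (unfold r, Cmod; simpl fst; simpl snd; apply sqrt_lt_R0; nra).
  assert (Hsq : sqrt r * sqrt r = r) by (apply sqrt_sqrt; lra).
  assert (Hs : sqrt (1 + (y/x)²) = r / x).
  { replace (1 + (y/x)²) with ((r/x)²).
    - apply sqrt_Rsqr, Rlt_le, Rdiv_lt_0_compat; lra.
    - unfold Rsqr. apply (Rmult_eq_reg_r (x*x)); [|nra]. field_simplify; lra. }
  assert (Hc : cos th = x / r) by (unfold th; rewrite cos_atan, Hs; field; lra).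
  assert (Hsn : sin th = y / r) by (unfold th; rewrite sin_atan, Hs; field; lra).
  assert (Hc2 : cos th = cos (th/2) * cos (th/2) - sin (th/2) * sin (th/2))
    by (rewrite <- cos_2a; f_equal; field).
  assert (Hs2 : sin th = 2 * sin (th/2) * cos (th/2))
    by (rewrite <- sin_2a; f_equal; field).
  apply injective_projections; simpl.
  - replace (sqrt r * cos (th / 2) * (sqrt r * cos (th / 2))
             - sqrt r * sin (th / 2) * (sqrt r * sin (th / 2)))
      with ((sqrt r * sqrt r) * (cos (th/2) * cos (th/2) - sin (th/2) * sin (th/2))) by ring.
    rewrite <- Hc2, Hsq, Hc. field. lra.
  - replace (sqrt r * cos (th / 2) * (sqrt r * sin (th / 2))
             + sqrt r * sin (th / 2) * (sqrt r * cos (th / 2)))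
      with ((sqrt r * sqrt r) * (2 * sin (th/2) * cos (th/2))) by ring.
    rewrite <- Hs2, Hsq, Hsn. field. lra.
Qed.

Theorem theorem3p2 (z : C) (hz : Cmod (Cminus z (RtoC 1)) < 1) :
  is_series (fun n : nat => Cmult (RtoC (coef3p2 n)) (Cpow (Cminus z (RtoC 1)) n))
            (Cdiv (Catan (Csqrt z)) (Csqrt z)).
Proof.
  assert (Hre : 0 < Re z).
  { pose proof (re_le_Cmod (Cminus z (RtoC 1))) as H.
    destruct z as [x y]. unfold Re in *; simpl in *.
    assert (Hlt : Rabs (x + - (1)) < 1) by lra.
    apply Rabs_def2 in Hlt. lra. }
  pose proof (Csqrt_sqr z Hre) as Hw.
  set (w := Csqrt z) in *. clearbody w. subst z.
  apply is_series_Catan_div, hz.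
Qed.
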